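(* Every ultrametric space $X$ (i.e.\ a metric space with $d(x,z)\le\max(d(x,y),d(y,z))$ for all $x,y,z$) satisfies $h_\infty(X)=0$.
   Context: Coarse entropy: for $\delta>0$, $P(n,\delta,x_0)$ is the set of $\delta$-paths $(x_0,\dots,x_n)$ (sequences with $d(x_i,x_{i+1})\le\delta$) starting at $x_0$, with distance $\max_i d(x_i,y_i)$; $s(n,R,\delta,x_0)$ is the supremum of cardinalities of $R$-separated subsets (distinct elements at distance $\ge R$) of $P(n,\delta,x_0)$; $h_\infty(X)=\lim_{\delta\to\infty}\lim_{R\to\infty}\limsup_{n\to\infty}\frac1n\log s(n,R,\delta,x_0)$, independent of $x_0$. *)

From mathcomp Require Import all_boot all_order all_algebra.
From mathcomp Require Import all_classical all_reals all_analysis.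
Set Implicit Arguments. Unset Strict Implicit. Unset Printing Implicit Defensive.
Import Order.TTheory GRing.Theory Num.Theory.
Local Open Scope ring_scope.
Local Open Scope classical_set_scope.

Section Coarse.
Variables (R : realType) (X : Type) (d : X -> X -> R).

Definition is_metric : Prop :=
  [/\ forall x y, 0 <= d x y,
      forall x y, d x y = 0 <-> x = y,
      forall x y, d x y = d y x &
      forall x y z, d x z <= d x y + d y z].

Definition is_ultrametric : Prop :=
  forall x y z, d x z <= Num.max (d x y) (d y z).

(* a path (x_0, ..., x_n) is a function 'I_(n+1) -> X *)
Definition path_seq (n : nat) := 'I_n.+1 -> X.

Definition delta_path (n : nat) (delta : R) (x0 : X) (p : path_seq n) : Prop :=
  p ord0 = x0 /\
  forall i : 'I_n.+1, forall (Hi : (i.+1 < n.+1)%N),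
    d (p i) (p (Ordinal Hi)) <= delta.

Definition path_dist (n : nat) (p q : path_seq n) : R :=
  \big[Num.max/0]_(i < n.+1) d (p i) (q i).

(* a finite R-separated subset of P(n,delta,x0) with k elements, given as an
   injective enumeration g : 'I_k -> P(n,delta,x0) *)
Definition separated_family (n : nat) (Rs delta : R) (x0 : X) (k : nat)
  (g : 'I_k -> path_seq n) : Prop :=
  (forall i, delta_path delta x0 (g i)) /\
  (forall i j, i <> j -> g i <> g j /\ Rs <= path_dist (g i) (g j)).

(* s(n,R,delta,x0): supremum of cardinalities of R-separated subsets
   (the supremum over finite ones; it is +oo iff there are arbitrarily large,
   equivalently infinite, ones) *)
Definition sep_number (n : nat) (Rs delta : R) (x0 : X) : \bar R :=
  ereal_sup [set (k%:R)%:E | k in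
     [set k : nat | exists g : 'I_k -> path_seq n, separated_family Rs delta x0 g]].

Definition elog (s : \bar R) : \bar R :=
  match s with
  | r%:E => (ln r)%:E
  | +oo%E => +oo%E
  | -oo%E => -oo%E
  end.

Definition entropy_rate (Rs delta : R) (x0 : X) : \bar R :=
  limn_esup (fun n : nat => ((n%:R)^-1)%:E * elog (sep_number n Rs delta x0))%E.

Definition coarse_entropy (x0 : X) : \bar R :=
  lim ((fun delta : R =>
          lim ((fun Rs : R => entropy_rate Rs delta x0) x @[x --> +oo]))
       y @[y --> +oo]).

End Coarse.

From mathcomp Require Import all_boot all_order all_algebra.
From mathcomp Require Import all_classical all_reals all_analysis.
Import Order.TTheory GRing.Theory Num.Theory.
Set Implicit Arguments. Unset Strict Implicit.
Local Open Scope ring_scope.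
Local Open Scope classical_set_scope.

(* In an ultrametric space a delta-path never leaves the closed delta-ball
   around its starting point: each step is at most delta and the ultrametric
   inequality stops the errors from adding up.  Hence any two delta-paths from
   x0 are within delta of each other, so once R > delta an R-separated set of
   delta-paths has at most one element; s(n, R, delta, x0) = 1 and every
   entropy rate vanishes for R large. *)

Section UltrametricPaths.
Variables (R : realType) (X : Type) (d : X -> X -> R) (x0 : X).
Hypothesis d_refl : forall x, d x x = 0.
Hypothesis d_sym : forall x y, d x y = d y x.
Hypothesis d_ultra : is_ultrametric d.

Lemma delta_path_in_ball n (delta : R) (p : path_seq X n) : 0 <= delta ->
  delta_path d delta x0 p -> forall i, d x0 (p i) <= delta.
Proof.
move=> delta_ge0 [p0 p_step] [m Hm].
elim: m Hm => [|m IHm] Hm.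
  have -> : Ordinal Hm = ord0 by apply: val_inj.
  by rewrite p0 d_refl.
apply: le_trans (d_ultra _ (p (Ordinal (ltnW Hm))) _) _.
by rewrite ge_max IHm; exact: (p_step (Ordinal (ltnW Hm)) Hm).
Qed.

Lemma delta_path_dist_le n (delta : R) (p q : path_seq X n) : 0 <= delta ->
  delta_path d delta x0 p -> delta_path d delta x0 q -> path_dist d p q <= delta.
Proof.
move=> delta_ge0 dp dq; apply: bigmax_le => // i _.
apply: le_trans (d_ultra _ x0 _) _.
by rewrite ge_max d_sym !delta_path_in_ball.
Qed.

Lemma separated_family_card_le1 n (Rs delta : R) k (g : 'I_k -> path_seq X n) :
  0 <= delta -> delta < Rs -> separated_family d Rs delta x0 g -> (k <= 1)%N.
Proof.
move=> delta_ge0 lt_delta_Rs [g_path g_sep].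
case: k g g_path g_sep => [|[|k]] // g g_path g_sep.
pose i1 : 'I_k.+2 := Ordinal (isT : (1 < k.+2)%N).
have [_ Rs_le] : g ord0 <> g i1 /\ Rs <= path_dist d (g ord0) (g i1).
  by apply: g_sep => /(congr1 val).
have := le_trans Rs_le (delta_path_dist_le delta_ge0 (g_path ord0) (g_path i1)).
by rewrite leNgt lt_delta_Rs.
Qed.

Lemma sep_number_eq1 n (Rs delta : R) : 0 <= delta -> delta < Rs ->
  sep_number d n Rs delta x0 = 1%E.
Proof.
move=> delta_ge0 lt_delta_Rs; apply/eqP; rewrite eq_le; apply/andP; split.
  apply: ge_ereal_sup => _ [k [g sep_g] <-].
  by rewrite lee_fin (ler_nat _ k 1) (separated_family_card_le1 delta_ge0 lt_delta_Rs sep_g).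
apply: ereal_sup_ubound; exists 1%N => //.
exists (fun _ _ => x0); split; last by move=> i j; rewrite !ord1.
by move=> _; split => // i Hi; rewrite d_refl.
Qed.

Lemma entropy_rate_eq0 (Rs delta : R) : 0 <= delta -> delta < Rs ->
  entropy_rate d Rs delta x0 = 0%E.
Proof.
move=> delta_ge0 lt_delta_Rs; rewrite /entropy_rate.
under eq_fun do rewrite sep_number_eq1 //= ln1 mule0.
rewrite (@is_cvg_limn_esupE _ (fun=> 0%E)); first by rewrite lim_cst.
exact: is_cvg_cst.
Qed.

End UltrametricPaths.

Theorem mainTheorem9 (R : realType) (X : Type) (d : X -> X -> R) (x0 : X) :
  is_metric d -> is_ultrametric d -> coarse_entropy d x0 = 0%E.
Proof.
move=> [_ d_eq0 d_sym _] d_ultra.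
have d_refl x : d x x = 0 by apply/d_eq0.
apply: cvg_lim => //; apply: cvg_near_cst; near=> delta.
apply: cvg_lim => //; apply: cvg_near_cst; near=> Rs.
exact: entropy_rate_eq0.
Unshelve. all: by end_near. Qed.
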